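(* In the standing setting, if a robust $\boldsymbol b$-flow exists, then there exists an optimal robust $\boldsymbol b$-flow $\boldsymbol f=(f^1,f^2)$ with $f^2(a)\ge f^1(a)$ for all arcs $a\in A$.
   Context: A RobMCF instance $(G,u,c,\boldsymbol b)$ consists of a finite directed graph (parallel arcs allowed) $G=(V,A)$ whose arc set is partitioned as $A=A^{\mathrm{fix}}\cup A^{\mathrm{free}}$ into fixed and free arcs, capacities $u:A\to\mathbb Z_{\ge0}$, costs $c:A\to\mathbb Z_{\ge0}$, a finite nonempty set of scenarios $\Lambda$, and balances $b^\lambda:V\to\mathbb Z$ with $\sum_{v}b^\lambda(v)=0$. A $b^\lambda$-flow is a function $f^\lambda:A\to\mathbb Z_{\ge0}$ with $f^\lambda(a)\le u(a)$ for all $a$ and $\sum_{a=(v,w)\in A}f^\lambda(a)-\sum_{a=(w,v)\in A}f^\lambda(a)=b^\lambda(v)$ for all $v\in V$; its cost is $c(f^\lambda)=\sum_a c(a)f^\lambda(a)$. A robust $\boldsymbol b$-flow is a tuple $(f^\lambda)_{\lambda\in\Lambda}$ of $b^\lambda$-flows with $f^\lambda(a)=f^{\lambda'}(a)$ for all $a\in A^{\mathrm{fix}}$, $\lambda,\lambda'\in\Lambda$; its cost is $\max_\lambda c(f^\lambda)$; it is optimal if of minimum cost. Series-parallel (SP) digraphs are defined recursively: a single arc $(o,q)$ is an SP digraph with origin $o$ and target $q$; if $G_1$ (origin $o_1$, target $q_1$) and $G_2$ (origin $o_2$, target $q_2$) are SP digraphs, then their series composition (identify $q_1$ with $o_2$;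 origin $o_1$, target $q_2$) and their parallel composition (identify $o_1$ with $o_2$ to form the origin and $q_1$ with $q_2$ to form the target) are SP digraphs. Standing setting: $G$ is an SP digraph with origin $o$ and target $q$, $\Lambda=\{1,2\}$, and there are integers $0\le d^1\le d^2$ with $b^\lambda(o)=d^\lambda$, $b^\lambda(q)=-d^\lambda$ and $b^\lambda(v)=0$ for all other $v$ (unique source $o$, unique sink $q$). *)

From mathcomp Require Import all_boot all_order all_algebra.
Set Implicit Arguments. Unset Strict Implicit. Unset Printing Implicit Defensive.
Import Order.TTheory GRing.Theory Num.Theory.

Inductive spt : Type :=
  | SPArc
  | SPSer of spt & spt
  | SPPar of spt & spt.

(* [sp_build t o q n] builds the SP digraph described by [t] with origin [o],
   target [q], using fresh vertex names starting at [n]; it returns the arc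
   list (tail, head) (parallel arcs = repeated pairs) and the next fresh name.
   Series composition identifies the target of the first part with the origin
   of the second (the fresh vertex [n]); parallel composition identifies the
   origins and the targets. *)
Fixpoint sp_build (t : spt) (o q n : nat) : seq (nat * nat) * nat :=
  match t with
  | SPArc => ([:: (o, q)], n)
  | SPSer t1 t2 =>
      let r1 := sp_build t1 o n n.+1 in
      let r2 := sp_build t2 n q r1.2 in
      (r1.1 ++ r2.1, r2.2)
  | SPPar t1 t2 =>
      let r1 := sp_build t1 o q n in
      let r2 := sp_build t2 o q r1.2 in
      (r1.1 ++ r2.1, r2.2)
  end.

(* The SP digraph of [t]: vertices 0 .. sp_nverts t - 1, origin 0, target 1. *)
Definition sp_arcs (t : spt) : seq (nat * nat) := (sp_build t 0 1 2).1.
Definition sp_nverts (t : spt) : nat := (sp_build t 0 1 2).2.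
Definition sp_origin : nat := 0.
Definition sp_target : nat := 1.

Notation sparc t := ('I_(size (sp_arcs t))).
Definition tl (t : spt) (a : sparc t) : nat := (nth (0, 0) (sp_arcs t) a).1.
Definition hd (t : spt) (a : sparc t) : nat := (nth (0, 0) (sp_arcs t) a).2.

Definition bal (d : nat) (v : nat) : int :=
  if v == sp_origin then Posz d else if v == sp_target then (- Posz d)%R else 0%R.

Definition is_bflow (t : spt) (u : sparc t -> nat) (d : nat) (f : sparc t -> nat) : Prop :=
  (forall a, f a <= u a) /\
  (forall v, v < sp_nverts t ->
     (Posz (\sum_(a : sparc t | tl a == v) f a) - Posz (\sum_(a : sparc t | hd a == v) f a))%R
       = bal d v).

Definition flow_cost (t : spt) (c : sparc t -> nat) (f : sparc t -> nat) : nat :=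
  \sum_(a : sparc t) c a * f a.

Definition is_robust (t : spt) (fixed : sparc t -> bool) (u : sparc t -> nat)
  (d1 d2 : nat) (f1 f2 : sparc t -> nat) : Prop :=
  [/\ is_bflow u d1 f1, is_bflow u d2 f2 & forall a, fixed a -> f1 a = f2 a].

Definition robust_cost (t : spt) (c : sparc t -> nat) (f1 f2 : sparc t -> nat) : nat :=
  maxn (flow_cost c f1) (flow_cost c f2).

Definition is_optimal_robust (t : spt) (fixed : sparc t -> bool) (u c : sparc t -> nat)
  (d1 d2 : nat) (f1 f2 : sparc t -> nat) : Prop :=
  is_robust fixed u d1 d2 f1 f2 /\
  forall g1 g2, is_robust fixed u d1 d2 g1 g2 ->
    robust_cost c f1 f2 <= robust_cost c g1 g2.

From mathcomp Require Import all_boot all_order all_algebra.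
From mathcomp Require Import zify.
From Stdlib Require Import Classical Wf_nat.
Set Implicit Arguments. Unset Strict Implicit. Unset Printing Implicit Defensive.
Import Order.TTheory GRing.Theory Num.Theory.

(* The heart of the argument is an interpolation property of
   series-parallel digraphs: if f1 and f2 are o-q flows of values d1 and d2,
   then for every value p between min(d1,d2) and d2 there is an o-q flow g of
   value p with min(f1,f2) <= g <= f2 arcwise.  It is proved by induction on
   the decomposition tree: a series composition passes the same value through
   both parts, a parallel composition splits p between the two parts.
   For the theorem, take an optimal robust flow (f1,f2) and interpolate at
   p = d1: the resulting g agrees with f1 = f2 on fixed arcs, respects the
   capacities since g <= f2, and has cost at most c(f2), so (g,f2) is again
   optimal and satisfies g <= f2. *)

Local Open Scope ring_scope.

Definition excess (L : seq (nat * nat)) (f : nat -> nat) (v : nat) : int :=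
  \sum_(0 <= i < size L)
    ((if (nth (0, 0)%N L i).1 == v then Posz (f i) else 0)
     - (if (nth (0, 0)%N L i).2 == v then Posz (f i) else 0)).

Definition stbal (o q : nat) (p : int) (v : nat) : int :=
  if v == o then p else if v == q then - p else 0.

Definition stflow (L : seq (nat * nat)) (o q : nat) (p : int) (f : nat -> nat) : Prop :=
  forall v, excess L f v = stbal o q p v.

Definition within (P : pred nat) (L : seq (nat * nat)) : bool :=
  all (fun e => P e.1 && P e.2) L.

Lemma within_sub (P Q : pred nat) L : (forall v, P v -> Q v) -> within P L -> within Q L.
Proof. by move=> PQ; apply: sub_all => e /andP[/PQ -> /PQ ->]. Qed.

Lemma within_cat P A B : within P A -> within P B -> within P (A ++ B).
Proof. by rewrite /within all_cat => -> ->. Qed.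

Definition glue (n : nat) (g1 g2 : nat -> nat) (i : nat) : nat :=
  if (i < n)%N then g1 i else g2 (i - n)%N.

Lemma excess_ext L f g v :
  (forall i, (i < size L)%N -> f i = g i) -> excess L f v = excess L g v.
Proof.
move=> fg; rewrite /excess big_nat [RHS]big_nat.
by apply: eq_bigr => i /andP[_ /fg ->].
Qed.

Lemma excess_cat L1 L2 f v :
  excess (L1 ++ L2) f v = excess L1 f v + excess L2 (fun i => f (size L1 + i)%N) v.
Proof.
rewrite /excess size_cat (@big_cat_nat _ _ _ (size L1)) ?leq_addr //=.
congr (_ + _).
  by rewrite !big_nat; apply: eq_bigr => i /andP[_ hi]; rewrite nth_cat hi.
rewrite -{1}[size L1]add0n big_addn addKn !big_nat; apply: eq_bigr => i _.
by rewrite nth_cat ltnNge leq_addl /= addnK addnC.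
Qed.

Lemma excess_glue A B g1 g2 v :
  excess (A ++ B) (glue (size A) g1 g2) v = excess A g1 v + excess B g2 v.
Proof.
rewrite excess_cat /glue; congr (_ + _); apply: excess_ext => i hi.
  by rewrite hi.
by rewrite ltnNge leq_addr /= addKn.
Qed.

Lemma glue_pointwise (A B : seq (nat * nat)) (P : nat -> nat -> bool) g1 g2 :
  (forall i, (i < size A)%N -> P i (g1 i)) ->
  (forall i, (i < size B)%N -> P (size A + i)%N (g2 i)) ->
  forall i, (i < size (A ++ B))%N -> P i (glue (size A) g1 g2 i).
Proof.
move=> PA PB i; rewrite size_cat /glue; case: ifP => [hi _|hi hiAB]; first exact: PA.
by have := PB (i - size A)%N; rewrite subnKC ?ltn_subLR ?hiAB //; lia.
Qed.

Lemma excess_isolated L f v :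
  within (fun w => w != v) L -> excess L f v = 0.
Proof.
move=> /allP hL; rewrite /excess big_nat big1 // => i /andP[_ hi].
have /andP[/negbTE -> /negbTE ->] := hL _ (mem_nth (0, 0)%N hi).
by rewrite subr0.
Qed.

(* Each arc contributes +f and -f to the total excess, which is thus zero. *)
Lemma excess_sum0 L f (S : seq nat) :
  uniq S -> within (mem S) L -> \sum_(v <- S) excess L f v = 0.
Proof.
have sum_pick (x : nat) (y : int) : x \in S -> uniq S ->
    \sum_(v <- S) (if x == v then y else 0) = y.
  move=> xS uS; rewrite -big_mkcond big_const_seq /=.
  rewrite (eq_count (a2 := pred1 x)) => [|v]; last by rewrite /= eq_sym.
  by rewrite count_uniq_mem // xS /= addr0.
move=> uS /allP hL; rewrite /excess exchange_big big_nat big1 // => i /andP[_ hi].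
have /andP[h1 h2] := hL _ (mem_nth (0, 0)%N hi).
by rewrite sumrB !sum_pick // subrr.
Qed.

Lemma stbal_series o n q p v : o != n -> n != q -> o != q ->
  stbal o n p v + stbal n q p v = stbal o q p v.
Proof.
move=> on nq oq; rewrite /stbal.
case: (v =P o) => [->|_]; first by rewrite (negbTE on) (negbTE oq) addr0.
by case: (v =P n) => [->|_]; rewrite ?(negbTE nq) ?addNr ?add0r.
Qed.

Lemma stbal_parallel o q x y v : stbal o q x v + stbal o q y v = stbal o q (x + y) v.
Proof.
by rewrite /stbal; case: (v =P o) => _ //; case: (v =P q) => _; rewrite ?opprD ?addr0.
Qed.

Definition sp_vertex (o q lo hi v : nat) : bool := [|| v == o, v == q | (lo <= v < hi)%N].

Lemma sp_build_vertices t o q n :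
  (n <= (sp_build t o q n).2)%N /\
  within (sp_vertex o q n (sp_build t o q n).2) (sp_build t o q n).1.
Proof.
elim: t o q n => [|t1 IH1 t2 IH2|t1 IH1 t2 IH2] o q n /=.
- by rewrite /within /sp_vertex /= !eqxx /= orbT.
- have [h1 a1] := IH1 o n n.+1; have [h2 a2] := IH2 n q (sp_build t1 o n n.+1).2.
  split; first lia.
  by apply: within_cat; [apply: within_sub a1 | apply: within_sub a2] => v;
    rewrite /sp_vertex; lia.
- have [h1 a1] := IH1 o q n; have [h2 a2] := IH2 o q (sp_build t1 o q n).2.
  split; first lia.
  by apply: within_cat; [apply: within_sub a1 | apply: within_sub a2] => v;
    rewrite /sp_vertex; lia.
Qed.

Lemma restrict_flow A B f a b lo hi :
  a != b -> (a < lo)%N -> (b < lo)%N ->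
  within (sp_vertex a b lo hi) A ->
  within (fun w => ~~ (lo <= w < hi)%N) B ->
  (forall v, (lo <= v < hi)%N -> excess (A ++ B) f v = 0) ->
  stflow A a b (excess A f a) f.
Proof.
move=> ab alo blo hA hB cons.
have internal0 w : w != a -> w != b -> excess A f w = 0.
  move=> wa wb; case hw: (lo <= w < hi)%N.
    have := cons w hw; rewrite excess_cat (@excess_isolated B) ?addr0 //.
    by apply: within_sub hB => x; lia.
  by apply: excess_isolated; apply: within_sub hA => x; rewrite /sp_vertex; lia.
move=> v; rewrite /stbal; case: eqP => [->//|/eqP va].
case: eqP => [->|/eqP vb]; last exact: internal0.
set S := a :: b :: iota lo (hi - lo).
have uS : uniq S by rewrite /= iota_uniq !inE !mem_iota andbT; lia.
have AS : within (mem S) A.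
  by apply: within_sub hA => w; rewrite /sp_vertex !inE !mem_iota; lia.
have := excess_sum0 f uS AS; rewrite !big_cons big1_seq ?addr0 => [sum0|w].
  by apply/eqP; rewrite -addr_eq0 addrC sum0.
by rewrite mem_iota => /andP[_ hw]; apply: internal0; lia.
Qed.

Lemma series_split A B o n q m1 m2 f d :
  o != q -> (o < n)%N -> (q < n)%N -> (n < m1)%N ->
  within (sp_vertex o n n.+1 m1) A -> within (sp_vertex n q m1 m2) B ->
  stflow (A ++ B) o q d f ->
  stflow A o n d f /\ stflow B n q d (fun i => f (size A + i)%N).
Proof.
move=> oq on qn nm hA hB hf.
have B_o : excess B (fun i => f (size A + i)%N) o = 0.
  by apply: excess_isolated; apply: within_sub hB => w; rewrite /sp_vertex; lia.
have A_o : excess A f o = d.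
  by have := hf o; rewrite excess_cat B_o addr0 /stbal eqxx.
have fA : stflow A o n d f.
  rewrite -A_o; apply: (@restrict_flow A B f o n n.+1 m1) => //; try lia.
    by apply: within_sub hB => w; rewrite /sp_vertex; lia.
  by move=> v hv; rewrite hf /stbal !ifN //; lia.
have [neq_on neq_nq] : o != n /\ n != q by split; lia.
split=> // v; apply: (@addrI _ (stbal o n d v)).
by rewrite stbal_series // -hf excess_cat fA.
Qed.

Lemma parallel_split A B o q n m1 m2 f d :
  o != q -> (o < n)%N -> (q < n)%N -> (n <= m1)%N ->
  within (sp_vertex o q n m1) A -> within (sp_vertex o q m1 m2) B ->
  stflow (A ++ B) o q d f ->
  stflow A o q (excess A f o) f /\
  stflow B o q (d - excess A f o) (fun i => f (size A + i)%N).
Proof.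
move=> oq on qn nm hA hB hf.
have fA : stflow A o q (excess A f o) f.
  apply: (@restrict_flow A B f o q n m1) => //.
    by apply: within_sub hB => w; rewrite /sp_vertex; lia.
  by move=> v hv; rewrite hf /stbal !ifN //; lia.
split=> // v; apply: (@addrI _ (stbal o q (excess A f o) v)).
by rewrite stbal_parallel subrKC -hf excess_cat (fA v).
Qed.

(* Splitting the target value in the parallel case: if [p] lies between
   min(d1,d2) and d2, and the two parts carry values x1, d1 - x1 under f1 and
   x2, d2 - x2 under f2, then p = pL + (p - pL) with each summand in the
   corresponding admissible range of its part. *)
Lemma split_value (x1 x2 d1 d2 p : int) : Num.min d1 d2 <= p -> p <= d2 ->
  exists pL, [/\ Num.min x1 x2 <= pL, pL <= x2,
                 Num.min (d1 - x1) (d2 - x2) <= p - pL & p - pL <= d2 - x2].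
Proof. by move=> *; exists (Num.max (Num.min x1 x2) (p - (d2 - x2))); split; lia. Qed.

Lemma excess_arc o q f v : o != q -> excess [:: (o, q)] f v = stbal o q (Posz (f 0%N)) v.
Proof.
move=> oq; rewrite /excess big_nat1 /stbal /= ![_ == v]eq_sym.
case: eqP => [->|_]; first by rewrite (negbTE oq) subr0.
by case: eqP => _; rewrite ?sub0r ?subr0.
Qed.

Lemma sp_interpolate t o q n : o != q -> (o < n)%N -> (q < n)%N ->
  forall f1 f2 d1 d2 p, let L := (sp_build t o q n).1 in
  stflow L o q d1 f1 -> stflow L o q d2 f2 ->
  Num.min d1 d2 <= p -> p <= d2 ->
  exists g, stflow L o q p g /\
    forall i, (i < size L)%N -> (minn (f1 i) (f2 i) <= g i <= f2 i)%N.
Proof.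
elim: t o q n => [|t1 IH1 t2 IH2|t1 IH1 t2 IH2] o q n oq on qn f1 f2 d1 d2 p /=
    hf1 hf2 p1 p2.
- have arc_value f d : stflow [:: (o, q)] o q d f -> Posz (f 0%N) = d.
    by move/(_ o); rewrite excess_arc // /stbal eqxx.
  move: p1 p2; rewrite -(arc_value _ _ hf1) -(arc_value _ _ hf2) => p1 p2.
  have p0 : 0 <= p by lia.
  exists (fun=> `|p|%N); split=> [v|i].
    by rewrite excess_arc // abszE ger0_norm.
  by rewrite ltnS leqn0 => /eqP ->; lia.
- set m1 := (sp_build t1 o n n.+1).2.
  have [nm1 A1] := sp_build_vertices t1 o n n.+1.
  have [_ A2] := sp_build_vertices t2 n q m1.
  have [f1A f1B] := series_split oq on qn nm1 A1 A2 hf1.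
  have [f2A f2B] := series_split oq on qn nm1 A1 A2 hf2.
  have [g1 [g1f g1b]] :=
    IH1 o n n.+1 ltac:(lia) ltac:(lia) ltac:(lia) _ _ _ _ _ f1A f2A p1 p2.
  have [g2 [g2f g2b]] := IH2 n q m1 ltac:(lia) nm1 ltac:(lia) _ _ _ _ _ f1B f2B p1 p2.
  exists (glue (size (sp_build t1 o n n.+1).1) g1 g2); split.
    by move=> v; rewrite excess_glue g1f g2f stbal_series //; lia.
  move=> i; exact: (@glue_pointwise _ _ (fun i x => minn (f1 i) (f2 i) <= x <= f2 i)%N
                    _ _ g1b g2b i).
- set m1 := (sp_build t1 o q n).2.
  have [nm1 A1] := sp_build_vertices t1 o q n.
  have [_ A2] := sp_build_vertices t2 o q m1.
  have [f1A f1B] := parallel_split oq on qn nm1 A1 A2 hf1.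
  have [f2A f2B] := parallel_split oq on qn nm1 A1 A2 hf2.
  have [pL [pL1 pL2 pR1 pR2]] :=
    split_value (excess (sp_build t1 o q n).1 f1 o) (excess (sp_build t1 o q n).1 f2 o)
      p1 p2.
  have [g1 [g1f g1b]] := IH1 o q n oq on qn _ _ _ _ _ f1A f2A pL1 pL2.
  have [g2 [g2f g2b]] := IH2 o q m1 oq ltac:(lia) ltac:(lia) _ _ _ _ _ f1B f2B pR1 pR2.
  exists (glue (size (sp_build t1 o q n).1) g1 g2); split.
    by move=> v; rewrite excess_glue g1f g2f stbal_parallel subrKC.
  move=> i; exact: (@glue_pointwise _ _ (fun i x => minn (f1 i) (f2 i) <= x <= f2 i)%N
                    _ _ g1b g2b i).
Qed.

Definition natf (t : spt) (f : sparc t -> nat) (i : nat) : nat :=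
  if (insub i : option (sparc t)) is Some a then f a else 0%N.

Lemma natfE t f (a : sparc t) : natf f a = f a.
Proof. by rewrite /natf valK. Qed.

Lemma natf_restrict t (g : nat -> nat) i :
  (i < size (sp_arcs t))%N -> natf (fun a : sparc t => g a) i = g i.
Proof. by move=> hi; rewrite /natf insubT. Qed.

Lemma excess_natf t (f : sparc t -> nat) v :
  Posz (\sum_(a : sparc t | tl a == v) f a) - Posz (\sum_(a : sparc t | hd a == v) f a)
  = excess (sp_arcs t) (natf f) v.
Proof.
have sumE (P : pred (sparc t)) :
    Posz (\sum_(a | P a) f a) = \sum_(a | P a) Posz (natf f a).
  by rewrite (big_morph Posz PoszD (erefl (Posz 0))); apply: eq_bigr => a _; rewrite natfE.
by rewrite /excess big_mkord sumrB !sumE -!big_mkcond.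
Qed.

Lemma bflow_stflow t (u : sparc t -> nat) d f :
  is_bflow u d f -> stflow (sp_arcs t) 0 1 (Posz d) (natf f).
Proof.
move=> [_ cons] v; case: (ltnP v (sp_nverts t)) => hv; first by rewrite -excess_natf cons.
have [ge2 hA] := sp_build_vertices t 0 1 2; move: hv ge2 hA.
rewrite /sp_nverts /sp_arcs; move: (sp_build t 0 1 2) => [L m] /= hv ge2 hA.
rewrite excess_isolated ?/stbal ?ifN //; try lia.
by apply: within_sub hA => w; rewrite /sp_vertex; lia.
Qed.

Lemma stflow_bflow t (u : sparc t -> nat) d (g : sparc t -> nat) :
  (forall a, g a <= u a)%N -> stflow (sp_arcs t) 0 1 (Posz d) (natf g) -> is_bflow u d g.
Proof. by move=> cap hg; split=> // v _; rewrite excess_natf hg. Qed.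

Local Close Scope ring_scope.

Lemma bflow_interpolate t (u : sparc t -> nat) d1 d2 f1 f2 : d1 <= d2 ->
  is_bflow u d1 f1 -> is_bflow u d2 f2 ->
  exists g, is_bflow u d1 g /\ forall a, minn (f1 a) (f2 a) <= g a <= f2 a.
Proof.
move=> d12 hf1 hf2.
have [g [gf gb]] := @sp_interpolate t 0 1 2 isT isT isT _ _ _ _ (Posz d1)
  (bflow_stflow hf1) (bflow_stflow hf2) ltac:(lia) ltac:(lia).
have gab (a : sparc t) : minn (f1 a) (f2 a) <= g a <= f2 a.
  by have := gb a (ltn_ord a); rewrite !natfE.
exists (fun a => g a); split=> //.
have [cap2 _] := hf2.
apply: stflow_bflow => [a|v].
  by case/andP: (gab a) => _ g_le_f2; exact: leq_trans g_le_f2 (cap2 a).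
by rewrite -gf; apply: excess_ext => i; apply: natf_restrict.
Qed.

(* Robust costs are natural numbers, so a cheapest robust flow exists. *)
Lemma exists_optimal_robust t (fixed : sparc t -> bool) (u c : sparc t -> nat) d1 d2 :
  (exists f1 f2, is_robust fixed u d1 d2 f1 f2) ->
  exists f1 f2, is_optimal_robust fixed u c d1 d2 f1 f2.
Proof.
move=> [f1 [f2 rf]].
pose P N := exists g1 g2, is_robust fixed u d1 d2 g1 g2 /\ robust_cost c g1 g2 = N.
have [N [[[g1 [g2 [rg <-]]] least] _]] : has_unique_least_element le P.
  apply: dec_inh_nat_subset_has_unique_least_element => [N|]; first exact: classic.
  by exists (robust_cost c f1 f2), f1, f2.
exists g1, g2; split=> // h1 h2 rh; apply/ssrnat.leP.
by apply: least; exists h1, h2.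
Qed.

Lemma flow_cost_mono t (c : sparc t -> nat) (f g : sparc t -> nat) :
  (forall a, f a <= g a) -> flow_cost c f <= flow_cost c g.
Proof. by move=> fg; apply: leq_sum => a _; rewrite leq_mul2l fg orbT. Qed.

Theorem mainTheorem16 (t : spt) (fixed : sparc t -> bool) (u c : sparc t -> nat)
  (d1 d2 : nat) :
  d1 <= d2 ->
  (exists f1 f2, is_robust fixed u d1 d2 f1 f2) ->
  exists f1 f2, is_optimal_robust fixed u c d1 d2 f1 f2 /\
    (forall a, f1 a <= f2 a).
Proof.
move=> d12 /(exists_optimal_robust c) [f1 [f2 [[hf1 hf2 fix12] opt]]].
have [g [hg gb]] := bflow_interpolate d12 hf1 hf2.
have g_le_f2 a : g a <= f2 a by case/andP: (gb a).
have rg : is_robust fixed u d1 d2 g f2.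
  split=> // a /fix12 eq12; apply/eqP; rewrite eqn_leq g_le_f2.
  by have := gb a; rewrite eq12 minnn => /andP[].
exists g, f2; split=> //; split=> // h1 h2 rh.
apply: leq_trans (opt _ _ rh); rewrite /robust_cost geq_max leq_maxr andbT.
exact: leq_trans (flow_cost_mono c g_le_f2) (leq_maxr _ _).
Qed.
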